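(* Let $\gamma=(\gamma_1,\gamma_2,\gamma_3):[a,b]\to\mathbb G$ be a Euclidean $C^2$-smooth regular curve and $t\in[a,b]$. Write $\omega(\dot\gamma(t))=\frac{\dot\gamma_2}{\gamma_1}-\dot\gamma_3$. (i) If $\omega(\dot\gamma(t))\ne0$, then $k^\infty_\gamma=\lim_{L\to+\infty}k^L_\gamma$ exists at $t$ and $$k^\infty_\gamma=\frac{\sqrt{\dot\gamma_1^2+\dot\gamma_2^2}}{|\gamma_1|\,|\omega(\dot\gamma(t))|}.$$ (ii) If $\omega(\dot\gamma(t))=0$ and $\frac{d}{dt}\omega(\dot\gamma(t))=0$, then the limit exists and, with $S=\big(\frac{\dot\gamma_1}{\gamma_1}\big)^2+\dot\gamma_3^2$, $$k^\infty_\gamma=\left\{\left[\Big(\frac{\ddot\gamma_1\gamma_1-\dot\gamma_1^2}{\gamma_1^2}\Big)^2+\ddot\gamma_3^2\right]S^{-2}-\left[\frac{\ddot\gamma_1\dot\gamma_1\gamma_1-\dot\gamma_1^3}{\gamma_1^3}+\dot\gamma_3\ddot\gamma_3\right]^2S^{-3}\right\}^{1/2}.$$ (iii) If $\omega(\dot\gamma(t))=0$ and $\frac{d}{dt}\omega(\dot\gamma(t))\ne0$, then $$\lim_{L\to+\infty}\frac{k^L_\gamma}{\sqrt L}=\frac{\big|\frac{d}{dt}\omega(\dot\gamma(t))\big|}{\big(\frac{\dot\gamma_1}{\gamma_1}\big)^2+\dot\gamma_3^2}.$$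
   Context: $\mathbb G=(0,\infty)\times\mathbb R^2$ is the affine group with coordinates $(x_1,x_2,x_3)$ and law $(a,b,c)\star(x,y,z)=(ax,ay+b,z+c)$. Let $X_1=x_1\partial_{x_1}$, $X_2=x_1\partial_{x_2}+\partial_{x_3}$, $X_3=x_1\partial_{x_2}$ with dual forms $\omega_1=x_1^{-1}dx_1$, $\omega_2=dx_3$, $\omega=x_1^{-1}dx_2-dx_3$. For $L>0$, $g_L=\omega_1\otimes\omega_1+\omega_2\otimes\omega_2+L\,\omega\otimes\omega$ with Levi-Civita connection $\nabla^L$, inner product $\langle\cdot,\cdot\rangle_L$ and norm $\|\cdot\|_L$. A curve is regular if $\dot\gamma\neq0$ everywhere. The curvature of $\gamma$ at $\gamma(t)$ is $$k^L_\gamma=\sqrt{\frac{\|\nabla^L_{\dot\gamma}\dot\gamma\|_L^2}{\|\dot\gamma\|_L^4}-\frac{\langle\nabla^L_{\dot\gamma}\dot\gamma,\dot\gamma\rangle_L^2}{\|\dot\gamma\|_L^6}},$$ and $k^\infty_\gamma:=\lim_{L\to+\infty}k^L_\gamma$ when it exists. *)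

From Stdlib Require Import Reals.
From Coquelicot Require Import Coquelicot.
Open Scope R_scope.

(* Points of G = (0,oo) x R^2 and tangent vectors are coordinate vectors
   indexed by 0,1,2 (coordinates x1,x2,x3). *)
Definition vec := nat -> R.
Definition sum3 (f : nat -> R) : R := f 0%nat + f 1%nat + f 2%nat.

Definition om1 (x : vec) (i : nat) : R :=
  match i with 0%nat => / x 0%nat | _ => 0 end.
Definition om2 (x : vec) (i : nat) : R :=
  match i with 2%nat => 1 | _ => 0 end.
Definition om (x : vec) (i : nat) : R :=
  match i with 1%nat => / x 0%nat | 2%nat => -1 | _ => 0 end.

Definition gL (L : R) (x : vec) (i j : nat) : R :=
  om1 x i * om1 x j + om2 x i * om2 x j + L * (om x i * om x j).

Definition upd (x : vec) (k : nat) (s : R) : vec :=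
  fun i => if Nat.eqb i k then s else x i.

Definition dgL (L : R) (x : vec) (k i j : nat) : R :=
  Derive (fun s => gL L (upd x k s) i j) (x k).

(* generic inverse of a 3x3 matrix via the adjugate (indices mod 3) *)
Definition m3 (i : nat) : nat := Nat.modulo i 3.
Definition cof3 (m : nat -> nat -> R) (i j : nat) : R :=
  m (m3 (i+1)) (m3 (j+1)) * m (m3 (i+2)) (m3 (j+2))
  - m (m3 (i+1)) (m3 (j+2)) * m (m3 (i+2)) (m3 (j+1)).
Definition det3 (m : nat -> nat -> R) : R :=
  sum3 (fun j => m 0%nat j * cof3 m 0%nat j).
Definition inv3 (m : nat -> nat -> R) (i j : nat) : R :=
  cof3 m j i / det3 m.

Definition christoffel (L : R) (x : vec) (k i j : nat) : R :=
  sum3 (fun l => inv3 (gL L x) k l *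
    ((dgL L x i j l + dgL L x j i l - dgL L x l i j) / 2)).

Definition cpt (g1 g2 g3 : R -> R) (t : R) : vec :=
  fun i => match i with 0%nat => g1 t | 1%nat => g2 t | _ => g3 t end.
Definition cvel (g1 g2 g3 : R -> R) (t : R) : vec :=
  fun i => match i with 0%nat => Derive g1 t | 1%nat => Derive g2 t
                        | _ => Derive g3 t end.
Definition cacc (g1 g2 g3 : R -> R) (t : R) : vec :=
  fun i => match i with 0%nat => Derive (Derive g1) t
                        | 1%nat => Derive (Derive g2) t
                        | _ => Derive (Derive g3) t end.

Definition covacc (L : R) (g1 g2 g3 : R -> R) (t : R) : vec :=
  fun k => cacc g1 g2 g3 t k +
    sum3 (fun i => sum3 (fun j =>
      christoffel L (cpt g1 g2 g3 t) k i j
        * cvel g1 g2 g3 t i * cvel g1 g2 g3 t j)).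

Definition ipL (L : R) (x : vec) (u w : vec) : R :=
  sum3 (fun i => sum3 (fun j => gL L x i j * u i * w j)).
Definition normL (L : R) (x : vec) (u : vec) : R := sqrt (ipL L x u u).

Definition kL (L : R) (g1 g2 g3 : R -> R) (t : R) : R :=
  let x := cpt g1 g2 g3 t in
  let v := cvel g1 g2 g3 t in
  let A := covacc L g1 g2 g3 t in
  sqrt (normL L x A ^ 2 / normL L x v ^ 4 - ipL L x A v ^ 2 / normL L x v ^ 6).

Definition omv (g1 g2 g3 : R -> R) (t : R) : R :=
  Derive g2 t / g1 t - Derive g3 t.

From Stdlib Require Import Reals Lra.
From Coquelicot Require Import Coquelicot.
Open Scope R_scope.

(* Write (a1, a2, a3) for the components of the velocity in the left-invariant
   coframe (om1, om2, om) and (e1, e2, e3) for their derivatives.  The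
   Christoffel symbols of g_L turn the components of the covariant acceleration
   into (e1 + L a3 (a2 + a3), e2 - L a1 a3, e3 - a1 a3), so (k^L)^2 is an
   explicit rational function of L.  When a3 = om(gamma') <> 0 it is a
   continuous function of 1/L near 0, whose value there gives (i).  When
   a3 = 0 it equals c + L (e3 / (a1^2 + a2^2))^2 with c independent of L, and
   e3 is the derivative of om(gamma'), which gives (ii) and (iii). *)

Definition form_app (f u : vec) : R := sum3 (fun i => f i * u i).

Lemma ipL_forms L x u w :
  ipL L x u w = form_app (om1 x) u * form_app (om1 x) w
                + form_app (om2 x) u * form_app (om2 x) w
                + L * (form_app (om x) u * form_app (om x) w).
Proof. unfold ipL, form_app, sum3, gL. ring. Qed.

Lemma ipL_self_nonneg L x u : 0 <= L -> 0 <= ipL L x u u.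
Proof. intros HL. rewrite ipL_forms. nra. Qed.

Lemma curvature_radicand_ipL L x A v : 0 <= L ->
  normL L x A ^ 2 / normL L x v ^ 4 - ipL L x A v ^ 2 / normL L x v ^ 6
  = ipL L x A A / ipL L x v v ^ 2 - ipL L x A v ^ 2 / ipL L x v v ^ 3.
Proof.
  intros HL. unfold normL.
  replace (sqrt (ipL L x v v) ^ 4) with ((sqrt (ipL L x v v) ^ 2) ^ 2) by ring.
  replace (sqrt (ipL L x v v) ^ 6) with ((sqrt (ipL L x v v) ^ 2) ^ 3) by ring.
  rewrite !pow2_sqrt by (apply ipL_self_nonneg; exact HL). reflexivity.
Qed.

Definition om1_dx1 (s : R) (i : nat) : R := match i with 0%nat => - / s ^ 2 | _ => 0 end.
Definition om_dx1 (s : R) (i : nat) : R := match i with 1%nat => - / s ^ 2 | _ => 0 end.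

Lemma dgL_x1 L x i j : x 0%nat <> 0 ->
  dgL L x 0 i j = om1_dx1 (x 0%nat) i * om1 x j + om1 x i * om1_dx1 (x 0%nat) j
                  + L * (om_dx1 (x 0%nat) i * om x j + om x i * om_dx1 (x 0%nat) j).
Proof.
  intros Hx. apply is_derive_unique. unfold gL, upd.
  destruct i as [|[|[|i]]], j as [|[|[|j]]]; simpl; auto_derive; auto; field; auto.
Qed.

Lemma dgL_succ L x k i j : dgL L x (S k) i j = 0.
Proof. exact (Derive_const (gL L x i j) (x (S k))). Qed.

Lemma det3_gL L x : det3 (gL L x) = L * (/ x 0%nat) ^ 4.
Proof. unfold det3, sum3, cof3, m3, gL, om1, om2, om; simpl. ring. Qed.

(* [ip] is g_L in the frame dual to (om1, om2, om), and (F1, F2, F3) are the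
   frame components of the covariant acceleration. *)
Definition curv2 (L a1 a2 a3 e1 e2 e3 : R) : R :=
  let ip u1 u2 u3 w1 w2 w3 := u1 * w1 + u2 * w2 + L * (u3 * w3) in
  let F1 := e1 + L * a3 * (a2 + a3) in
  let F2 := e2 - L * a1 * a3 in
  let F3 := e3 - a1 * a3 in
  ip F1 F2 F3 F1 F2 F3 / ip a1 a2 a3 a1 a2 a3 ^ 2
  - ip F1 F2 F3 a1 a2 a3 ^ 2 / ip a1 a2 a3 a1 a2 a3 ^ 3.

Lemma is_lim_pinfty_inv (F h : R -> R) :
  (forall L, 0 < L -> F L = h (/ L)) -> continuous h 0 -> is_lim F p_infty (h 0).
Proof.
  intros HF Hh.
  apply is_lim_ext_loc with (fun L => h (/ L)).
  { exists 0. intros L HL. symmetry. apply HF. exact HL. }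
  apply is_lim_comp_continuous; [| exact Hh].
  change (Finite 0) with (Rbar_inv p_infty).
  apply (is_lim_inv (fun L => L)); [apply is_lim_id | discriminate].
Qed.

Lemma curv2_lim_nonhorizontal a1 a2 a3 e1 e2 e3 : a3 <> 0 ->
  is_lim (fun L => sqrt (curv2 L a1 a2 a3 e1 e2 e3)) p_infty
    (sqrt ((a1 ^ 2 + (a2 + a3) ^ 2) / a3 ^ 2)).
Proof.
  intros H3.
  assert (Ha3 : 0 < a3 ^ 2) by (apply pow2_gt_0; exact H3).
  assert (Hs : 0 <= a1 ^ 2 + a2 ^ 2) by nra.
  pose (V u := u * (a1 ^ 2 + a2 ^ 2) + a3 ^ 2).
  pose (h u := ((u * e1 + a3 * (a2 + a3)) ^ 2 + (u * e2 - a1 * a3) ^ 2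
                + u * (e3 - a1 * a3) ^ 2) / V u ^ 2
               - u * (u * (a1 * e1 + a2 * e2) + a3 * e3) ^ 2 / V u ^ 3).
  replace ((a1 ^ 2 + (a2 + a3) ^ 2) / a3 ^ 2) with (h 0)
    by (unfold h, V; field; exact H3).
  apply (is_lim_pinfty_inv _ (fun u => sqrt (h u))).
  - intros L HL. f_equal.
    assert (0 < V (/ L)) by (unfold V; pose proof (Rinv_0_lt_compat L HL); nra).
    assert (0 < a1 * a1 + a2 * a2 + L * (a3 * a3)) by nra.
    unfold curv2, h. unfold V in *. field. lra.
  - apply continuous_sqrt_comp, (ex_derive_continuous (V := R_NormedModule)).
    unfold h, V. auto_derive. rewrite !Rmult_0_l, !Rplus_0_l.
    repeat split; repeat apply Rmult_integral_contrapositive_currified; auto with real.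
Qed.

Lemma curv2_horizontal L a1 a2 e1 e2 e3 : a1 ^ 2 + a2 ^ 2 <> 0 ->
  curv2 L a1 a2 0 e1 e2 e3
  = (e1 ^ 2 + e2 ^ 2) / (a1 ^ 2 + a2 ^ 2) ^ 2
    - (a1 * e1 + a2 * e2) ^ 2 / (a1 ^ 2 + a2 ^ 2) ^ 3
    + L * (e3 / (a1 ^ 2 + a2 ^ 2)) ^ 2.
Proof.
  intros HS. unfold curv2.
  replace (a1 * a1 + a2 * a2 + L * (0 * 0)) with (a1 ^ 2 + a2 ^ 2) by ring.
  field. exact HS.
Qed.

Lemma curv2_lim_horizontal a1 a2 e1 e2 e3 : 0 < a1 ^ 2 + a2 ^ 2 ->
  is_lim (fun L => sqrt (curv2 L a1 a2 0 e1 e2 e3) / sqrt L) p_infty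
    (Rabs e3 / (a1 ^ 2 + a2 ^ 2)).
Proof.
  intros HS.
  set (S := a1 ^ 2 + a2 ^ 2) in *.
  set (c := (e1 ^ 2 + e2 ^ 2) / S ^ 2 - (a1 * e1 + a2 * e2) ^ 2 / S ^ 3).
  replace (Rabs e3 / S) with (sqrt (c * 0 + (e3 / S) ^ 2)).
  - apply (is_lim_pinfty_inv _ (fun u => sqrt (c * u + (e3 / S) ^ 2))).
    + intros L HL. rewrite <- sqrt_div_alt by exact HL. f_equal.
      rewrite curv2_horizontal by (unfold S in HS; lra).
      unfold c, S in *. field. split; lra.
    + apply continuous_sqrt_comp, (ex_derive_continuous (V := R_NormedModule)).
      auto_derive. exact I.
  - rewrite Rmult_0_r, Rplus_0_l, <- Rsqr_pow2, sqrt_Rsqr_abs, Rabs_div by lra.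
    rewrite (Rabs_right S) by lra. reflexivity.
Qed.

Section Curve.
Variables (g1 g2 g3 : R -> R) (t : R).
Hypothesis HX : g1 t <> 0.

Local Notation X := (g1 t).
Local Notation d1 := (Derive g1 t).
Local Notation d2 := (Derive g2 t).
Local Notation d3 := (Derive g3 t).
Local Notation dd1 := (Derive (Derive g1) t).
Local Notation dd2 := (Derive (Derive g2) t).
Local Notation dd3 := (Derive (Derive g3) t).
Local Notation a1 := (d1 / X).
Local Notation a2 := d3.
Local Notation a3 := (omv g1 g2 g3 t).
Local Notation e1 := ((dd1 * X - d1 ^ 2) / X ^ 2).
Local Notation e2 := dd3.
Local Notation e3 := (dd2 / X - d1 * d2 / X ^ 2 - dd3).

Lemma cvel_frame :
  form_app (om1 (cpt g1 g2 g3 t)) (cvel g1 g2 g3 t) = a1 /\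
  form_app (om2 (cpt g1 g2 g3 t)) (cvel g1 g2 g3 t) = a2 /\
  form_app (om (cpt g1 g2 g3 t)) (cvel g1 g2 g3 t) = a3.
Proof. unfold form_app, sum3, omv, Rdiv; simpl. repeat split; ring. Qed.

Lemma covacc_frame L : L <> 0 ->
  form_app (om1 (cpt g1 g2 g3 t)) (covacc L g1 g2 g3 t) = e1 + L * a3 * (a2 + a3) /\
  form_app (om2 (cpt g1 g2 g3 t)) (covacc L g1 g2 g3 t) = e2 - L * a1 * a3 /\
  form_app (om (cpt g1 g2 g3 t)) (covacc L g1 g2 g3 t) = e3 - a1 * a3.
Proof.
  intros HL.
  assert (Hx : cpt g1 g2 g3 t 0%nat <> 0) by exact HX.
  unfold form_app, covacc, christoffel, sum3.
  rewrite !(dgL_x1 _ _ _ _ Hx), !dgL_succ. unfold inv3. rewrite !det3_gL.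
  unfold cof3, m3, om1_dx1, om_dx1, gL, om1, om2, om, cpt, cvel, cacc, omv; simpl.
  repeat split; field; auto.
Qed.

Lemma kL_curv2 L : 0 < L -> kL L g1 g2 g3 t = sqrt (curv2 L a1 a2 a3 e1 e2 e3).
Proof.
  intros HL.
  destruct cvel_frame as (V1 & V2 & V3).
  destruct (covacc_frame L) as (A1 & A2 & A3); [lra |].
  unfold kL. rewrite curvature_radicand_ipL by lra.
  rewrite !ipL_forms, V1, V2, V3, A1, A2, A3. reflexivity.
Qed.

Lemma Derive_omv :
  ex_derive g1 t -> ex_derive (Derive g2) t -> ex_derive (Derive g3) t ->
  Derive (omv g1 g2 g3) t = e3.
Proof.
  intros H1 H2 H3. apply is_derive_unique. unfold omv.
  auto_derive; [auto |].
  (* [field] does not identify the eta-expanded functions left by [auto_derive]. *)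
  change (fun s => Derive g2 s) with (Derive g2).
  change (fun s => Derive g3 s) with (Derive g3).
  change (fun s => g1 s) with g1.
  field. exact HX.
Qed.

Lemma horizontal_speed_pos :
  a3 = 0 -> ~ (d1 = 0 /\ d2 = 0 /\ d3 = 0) -> 0 < a1 ^ 2 + a2 ^ 2.
Proof.
  intros Hw Hreg.
  destruct (Rle_lt_or_eq_dec 0 (a1 ^ 2 + a2 ^ 2)) as [Hpos | H0]; [nra | exact Hpos |].
  exfalso. apply Hreg.
  rewrite <- !Rsqr_pow2 in H0. destruct (Rplus_sqr_eq_0 _ _ (eq_sym H0)) as [Ha1 Hd3].
  unfold omv in Hw. rewrite Hd3, Rminus_0_r in Hw.
  assert (Hdiv : forall u, u / X = 0 -> u = 0).
  { intros u Hu. replace u with (u / X * X) by (field; exact HX). rewrite Hu. ring. }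
  auto.
Qed.

Lemma nonhorizontal_limit_value : a3 <> 0 ->
  sqrt ((a1 ^ 2 + (a2 + a3) ^ 2) / a3 ^ 2) = sqrt (d1 ^ 2 + d2 ^ 2) / (Rabs X * Rabs a3).
Proof.
  intros Hw.
  replace ((a1 ^ 2 + (a2 + a3) ^ 2) / a3 ^ 2) with ((d1 ^ 2 + d2 ^ 2) / (X * a3) ^ 2).
  2: { unfold omv in *. field. split; [exact HX |].
       intros E. apply Hw. replace d2 with (d3 * X) by lra. field. exact HX. }
  rewrite sqrt_div_alt by (apply pow2_gt_0, Rmult_integral_contrapositive; split; assumption).
  rewrite <- (Rsqr_pow2 (X * a3)), sqrt_Rsqr_abs, Rabs_mult. reflexivity.
Qed.
End Curve.

Theorem lemma2p6 (g1 g2 g3 : R -> R) (a b t : R) :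
  (* gamma takes values in G *)
  (forall s, a <= s <= b -> 0 < g1 s) ->
  (* Euclidean C^2 smoothness on [a,b] *)
  (forall s, a <= s <= b ->
     ex_derive g1 s /\ ex_derive g2 s /\ ex_derive g3 s /\
     ex_derive (Derive g1) s /\ ex_derive (Derive g2) s /\
     ex_derive (Derive g3) s /\
     continuous (Derive (Derive g1)) s /\ continuous (Derive (Derive g2)) s /\
     continuous (Derive (Derive g3)) s) ->
  (* regularity *)
  (forall s, a <= s <= b ->
     ~ (Derive g1 s = 0 /\ Derive g2 s = 0 /\ Derive g3 s = 0)) ->
  a <= t <= b ->
  let d1 := Derive g1 t in
  let d2 := Derive g2 t in
  let d3 := Derive g3 t in
  let dd1 := Derive (Derive g1) t in
  let dd3 := Derive (Derive g3) t in
  let w := omv g1 g2 g3 t in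
  let dw := Derive (omv g1 g2 g3) t in
  let S := (d1 / g1 t) ^ 2 + d3 ^ 2 in
  (w <> 0 ->
     is_lim (fun L => kL L g1 g2 g3 t) p_infty
       (sqrt (d1 ^ 2 + d2 ^ 2) / (Rabs (g1 t) * Rabs w)))
  /\
  (w = 0 -> dw = 0 ->
     is_lim (fun L => kL L g1 g2 g3 t) p_infty
       (sqrt ((((dd1 * g1 t - d1 ^ 2) / g1 t ^ 2) ^ 2 + dd3 ^ 2) / S ^ 2
              - ((dd1 * d1 * g1 t - d1 ^ 3) / g1 t ^ 3 + d3 * dd3) ^ 2
                / S ^ 3)))
  /\
  (w = 0 -> dw <> 0 ->
     is_lim (fun L => kL L g1 g2 g3 t / sqrt L) p_infty (Rabs dw / S)).
Proof.
  intros Hpos Hsm Hreg Ht d1 d2 d3 dd1 dd3 w dw S.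
  assert (HX : g1 t <> 0) by (apply Rgt_not_eq, Hpos, Ht).
  destruct (Hsm t Ht) as (Hd1 & _ & _ & _ & Hdd2 & Hdd3 & _).
  assert (Hk : forall L, 0 < L -> kL L g1 g2 g3 t
             = sqrt (curv2 L (d1 / g1 t) d3 w ((dd1 * g1 t - d1 ^ 2) / g1 t ^ 2) dd3 dw)).
  { intros L HL. unfold dw. rewrite Derive_omv by assumption. apply kL_curv2; assumption. }
  assert (HS : w = 0 -> 0 < S)
    by (intros Hw; exact (horizontal_speed_pos g1 g2 g3 t HX Hw (Hreg t Ht))).
  split; [| split].
  - intros Hw.
    eapply is_lim_ext_loc; [exists 0; intros L HL; symmetry; apply Hk, HL |].
    unfold d1, d2, w. rewrite <- nonhorizontal_limit_value by assumption.
    apply curv2_lim_nonhorizontal, Hw.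
  - intros Hw Hdw. specialize (HS Hw). rewrite Hw, Hdw in Hk.
    eapply is_lim_ext_loc; [| apply is_lim_const].
    exists 0. intros L HL.
    rewrite Hk by exact HL. rewrite curv2_horizontal by exact (Rgt_not_eq _ _ HS).
    fold S. f_equal. clearbody S. field. split; [apply Rgt_not_eq, HS | exact HX].
  - intros Hw _. rewrite Hw in Hk.
    eapply is_lim_ext_loc; [exists 0; intros L HL; symmetry; rewrite Hk by exact HL; reflexivity |].
    apply curv2_lim_horizontal, HS, Hw.
Qed.
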